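(* Let $\mathbb F\in\{\mathbb C,\mathbb R\}$, $n>1$, and $\gamma\in\mathbb F^n$ with $\operatorname{diag}(\gamma_1,\dots,\gamma_n)$ not proportional to the identity. Then the functions $|X^{\varkappa,n}_{1,k}|$, $k=1,\dots,[n/2]$, where $\varkappa=n-k+1$, are functionally independent (global) relative invariants of the coadjoint action ${\rm Ad}^*_{{\rm T}_\gamma(n)}$ on $\mathfrak t_\gamma^*(n)$.
   Context: $\mathfrak t_\gamma(n)$ is the Lie algebra over $\mathbb F$ with basis $e_{ij}$ ($1\leqslant i<j\leqslant n$), $f$, brackets $[e_{ij},e_{i'j'}]=\delta_{i'j}e_{ij'}-\delta_{ij'}e_{i'j}$, $[f,e_{ij}]=(\gamma_i-\gamma_j)e_{ij}$; it is the Lie algebra of ${\rm T}_\gamma(n)=\{B\text{ nonsingular upper triangular}\mid\exists\varepsilon:\ b_{ii}=e^{\gamma_i\varepsilon}\}$ with $e_{ij}\sim E^n_{ij}$, $f\sim\operatorname{diag}(\gamma)$ and coadjoint action $({\rm Ad}^*_B\xi)(y)=\xi(B^{-1}yB)$. $x_{ji}$ ($i<j$) is the coordinate on $\mathfrak t_\gamma^*(n)$ dual to $e_{ij}$; $X$ is the strictly lower triangular matrix with entries $x_{ij}$ ($i>j$); $X^{i_1,i_2}_{j_1,j_2}$ is the submatrix with rows $i_1..i_2$ and columns $j_1..j_2$, $|\cdot|$ the determinant. A function $F$ on a $G$-space $M$ is a (global) relative invariant if $F(g\cdot x)=\mu(g,x)F(x)$ for all $g\in G$, $x\in M$, for some multiplier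 $\mu\colon G\times M\to\mathbb F$. *)

From HB Require Import structures.
From mathcomp Require Import all_boot all_order all_algebra.
From mathcomp Require Import complex.
From mathcomp Require Import all_classical all_reals all_analysis.
Set Implicit Arguments. Unset Strict Implicit. Unset Printing Implicit Defensive.
Import Order.TTheory GRing.Theory Num.Theory.
Local Open Scope ring_scope.

(* Generic setting: a numeric field F (R or C), an exponential ex on F, *)
(* n, and gamma in F^n (0-indexed: gamma i, i : 'I_n).                  *)
Section Coadjoint.
Variables (F : numFieldType) (ex : F -> F) (n : nat) (gamma : 'I_n -> F).

(* A point xi of t_gamma^*(n) is given by its coordinates:             *)
(*   xi.1 : the strictly lower triangular matrix X, X j i = x_{ji}     *)
(*          = xi(e_{ij}) (i < j);                                      *)
(*   xi.2 : the coordinate xi(f).                                      *)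
Definition tstar := ('M[F]_n * F)%type.

Definition in_tstar (xi : tstar) : Prop :=
  forall i j : 'I_n, (i <= j)%N -> xi.1 i j = 0.

Definition in_Tgamma (B : 'M[F]_n) : Prop :=
  [/\ (forall i j : 'I_n, (j < i)%N -> B i j = 0),
      B \in unitmx &
      exists eps : F, forall i : 'I_n, B i i = ex (gamma i * eps)].

(* Value of xi on the element  a f + sum_{i<j} M i j e_{ij}  of t_gamma(n)
   (only the strictly upper entries of M are used). *)
Definition pairing (xi : tstar) (a : F) (M : 'M[F]_n) : F :=
  a * xi.2 + \sum_(i < n) \sum_(j < n | (i < j)%N) xi.1 j i * M i j.

(* Coadjoint action (Ad^*_B xi)(y) = xi(B^{-1} y B), in coordinates:
   e_{ij} ~ E_{ij} (f-coefficient 0), f ~ diag(gamma) (f-coefficient 1);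
   for upper triangular B the diagonal of B^{-1} y B equals that of y. *)
Definition coad (B : 'M[F]_n) (xi : tstar) : tstar :=
  (\matrix_(j < n, i < n)
      (if (i < j)%N then pairing xi 0 (invmx B *m delta_mx i j *m B) else 0),
   pairing xi 1 (invmx B *m diag_mx (\row_k gamma k) *m B)).

Definition rel_invariant (Phi : tstar -> F) : Prop :=
  exists mu : 'M[F]_n -> tstar -> F,
    forall (B : 'M[F]_n) (xi : tstar), in_Tgamma B -> in_tstar xi ->
      Phi (coad B xi) = mu B xi * Phi xi.

Definition ent (X : 'M[F]_n) (i j : nat) : F :=
  match (insub i : option 'I_n), (insub j : option 'I_n) with
  | Some i', Some j' => X i' j'
  | _, _ => 0
  end.

(* |X^{kappa,n}_{1,k}| with kappa = n-k+1 (1-based rows kappa..n,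
   columns 1..k); 0-based rows n-k .. n-1, columns 0 .. k-1. *)
Definition minorX (k : nat) (xi : tstar) : F :=
  \det (\matrix_(r < k, c < k) ent xi.1 (n - k + r) c).

Definition is_pderiv (Phi : tstar -> F) (xi v : tstar) (L : F) : Prop :=
  forall e : F, 0 < e -> exists2 d : F, 0 < d &
    forall h : F, h != 0 -> `|h| < d ->
      `|(Phi (xi.1 + h *: v.1, xi.2 + h * v.2) - Phi xi) / h - L| < e.

Definition indep_differentials (m : nat) (Phi : 'I_m -> tstar -> F)
    (xi : tstar) : Prop :=
  exists (D : 'I_m -> 'I_n -> 'I_n -> F) (Dz : 'I_m -> F),
    [/\ forall k (j i : 'I_n), (i < j)%N ->
          is_pderiv (Phi k) xi (delta_mx j i, 0) (D k j i),
        forall k, is_pderiv (Phi k) xi (0, 1) (Dz k) &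
        forall a : 'I_m -> F,
          (forall j i : 'I_n, (i < j)%N -> \sum_k a k * D k j i = 0) ->
          \sum_k a k * Dz k = 0 ->
          forall k, a k = 0].

(* Functional independence: the differentials are linearly independent on a
   dense subset of t_gamma^*(n). *)
Definition func_independent (m : nat) (Phi : 'I_m -> tstar -> F) : Prop :=
  forall xi : tstar, in_tstar xi -> forall e : F, 0 < e ->
    exists xi' : tstar,
      [/\ in_tstar xi',
          forall i j : 'I_n, `|xi'.1 i j - xi.1 i j| < e,
          `|xi'.2 - xi.2| < e &
          indep_differentials Phi xi'].

Definition corollary1_statement : Prop :=
  (forall k : 'I_(n./2), rel_invariant (minorX k.+1)) /\
  func_independent (fun k : 'I_(n./2) => minorX k.+1).

End Coadjoint.

Local Open Scope complex_scope.
Definition cexp (R : realType) (z : R[i]) : R[i] :=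
  let: Complex a b := z in
  (expR a)%:C * ((cos b)%:C + 'i * (sin b)%:C).

From HB Require Import structures.
From mathcomp Require Import all_boot all_order all_algebra.
From mathcomp Require Import complex.
From mathcomp Require Import all_classical all_reals all_analysis.
From mathcomp Require Import perm ring zify.
Set Implicit Arguments. Unset Strict Implicit. Unset Printing Implicit Defensive.
Import Order.TTheory GRing.Theory Num.Theory.
Local Open Scope ring_scope.

(* For upper triangular [B] the coadjoint action transforms the strictly lower
   part of [X] as [X |-> B X B^-1].  When [2 s <= n] the lower-left [s x s]
   corner of [X] lies strictly below the diagonal, and triangularity of [B]
   and [B^-1] gives [corner (B X B^-1) = B22 * corner X * (B^-1)11]; so the
   corner minor is multiplied by a factor depending on [B] only.

   For independence, let [P] carry ones on the anti-diagonal in the first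
   [n/2] columns.  The [s]-th corner of [X + t P] is [M + t J] with [J] the
   exchange matrix, and [det (M + t J)] is a nonzero polynomial in [t]; so
   arbitrarily close to any point all corner minors are nonzero.  There the
   minor of order [k+1] is affine in the top-right entry of its corner with
   slope [+-] the minor of order [k], while the smaller minors do not involve
   that entry: the Jacobian is triangular with nonzero diagonal. *)

Lemma sum_ord_suffix (V : nmodType) n s (G : nat -> V) : (s <= n)%N ->
  (forall q, (q < n - s)%N -> G q = 0) ->
  \sum_(q < n) G q = \sum_(r < s) G (n - s + r)%N.
Proof.
move=> sn G0.
rewrite -(big_mkord xpredT) (@big_cat_nat _ _ _ (n - s)%N) ?leq_subr //.
rewrite big_nat_cond big1 => [|q /andP[/andP[_ /G0 //]]].
rewrite -[(n - s)%N]add0n big_addn subKn // big_mkord.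
by rewrite Monoid.mul1m; apply: eq_bigr => r _; rewrite addnC.
Qed.

Lemma sum_ord_prefix (V : nmodType) n s (G : nat -> V) : (s <= n)%N ->
  (forall q, (s <= q)%N -> G q = 0) ->
  \sum_(q < n) G q = \sum_(c < s) G c.
Proof.
move=> sn G0; rewrite (big_ord_widen n G sn) [RHS]big_mkcond.
by apply: eq_bigr => q _; case: ltnP => // /G0.
Qed.

Lemma mulmx_delta_mxE (R : pzRingType) m n p q (A : 'M[R]_(m, n)) (C : 'M[R]_(p, q))
    a b i j : (A *m delta_mx a b *m C) i j = A i a * C b j.
Proof.
rewrite !mxE (bigD1 b) //= big1 => [|b' b'b]; last first.
  by rewrite !mxE big1 ?mul0r // => a' _; rewrite !mxE (negbTE b'b) andbF mulr0.
rewrite !mxE (bigD1 a) //= big1 => [|a' a'a]; last by rewrite !mxE (negbTE a'a) mulr0.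
by rewrite !mxE !eqxx mulr1 !addr0.
Qed.

Lemma invmx_trig (R : fieldType) m (A : 'M[R]_m) :
  is_trig_mx A -> A \in unitmx -> is_trig_mx (invmx A).
Proof.
move=> A_trig A_unit; have /is_trig_mxP A0 := A_trig.
have Adiag i : A i i != 0.
  move: A_unit; rewrite unitmxE det_trig // unitfE.
  by move/prodf_neq0/(_ i isT).
apply/is_trig_mxP => i; have [d] := ubnP i; elim: d i => // d IH i.
rewrite ltnS => id j ij; move/matrixP: (mulmxV A_unit) => /(_ i j).
rewrite !mxE -val_eqE (ltn_eqF ij) (bigD1 i) //= big1 => [|q qi]; last first.
  case: (ltngtP q i) => [qi'|iq|/val_inj/eqP]; last by rewrite (negbTE qi).
  - by rewrite IH ?mulr0 //; [apply: leq_trans id | apply: ltn_trans ij].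
  - by rewrite A0 ?mul0r.
by rewrite addr0 => /eqP; rewrite mulf_eq0 (negbTE (Adiag i)) => /eqP.
Qed.

Lemma det_affine_in_row (R : comNzRingType) m (M E : 'M[R]_m) (r0 : 'I_m) h :
  (forall r c, r != r0 -> E r c = 0) ->
  \det (M + h *: E) = \det M + h * (\det (M + E) - \det M).
Proof.
move=> E0; rewrite (@determinant_multilinear _ _ _ M (M + E) r0 (1 - h) h).
- ring.
- by apply/rowP => c; rewrite !mxE; ring.
all: by apply/matrixP => r c; rewrite !mxE E0 ?mulr0 ?addr0 // eq_sym neq_lift.
Qed.

Lemma det_add_delta (R : comNzRingType) m (M : 'M[R]_m) r c :
  \det (M + delta_mx r c) = \det M + cofactor M r c.
Proof.
have cofE c' : cofactor (M + delta_mx r c) r c' = cofactor M r c'.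
  rewrite /cofactor; congr (_ * \det _); apply/matrixP => i j.
  by rewrite !mxE eq_sym (negbTE (neq_lift r i)) addr0.
rewrite !(expand_det_row _ r); under eq_bigr do rewrite cofE !mxE eqxx mulrDl.
rewrite big_split /=; congr (_ + _).
by rewrite (bigD1 c) //= eqxx mul1r big1 ?addr0 // => i /negbTE->; rewrite mul0r.
Qed.

Lemma trig_mx_row_free (R : fieldType) m (D : 'M[R]_m) (a : 'rV[R]_m) :
  is_trig_mx D -> (forall k, D k k != 0) -> a *m D = 0 -> a = 0.
Proof.
move=> D_trig Ddiag aD0.
have D_unit : D \in unitmx.
  by rewrite unitmxE det_trig // unitfE; apply/prodf_neq0 => k _.
by rewrite -(mulmxK D_unit a) aD0 mul0mx.
Qed.

Lemma exists_small_nonroot (F : numFieldType) (p : {poly F}) (e : F) :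
  p != 0 -> 0 < e -> exists2 t : F, `|t| < e & ~~ root p t.
Proof.
move=> p0 e0; pose ts := [seq e / i.+2%:R | i <- iota 0 (size p)].
have ts_uniq : uniq ts.
  rewrite map_inj_uniq ?iota_uniq // => i j /(mulfI (lt0r_neq0 e0))/invr_inj/eqP.
  by rewrite eqr_nat !eqSS => /eqP.
have /allPn[_ /mapP[i _ ->] nroot] : ~~ all (root p) ts.
  apply/negP => /(max_poly_roots p0)/(_ ts_uniq).
  by rewrite size_map size_iota ltnn.
exists (e / i.+2%:R) => //; rewrite ger0_norm ?divr_ge0 ?ler0n ?ltW //.
by rewrite ltr_pdivrMr ?ltr0n // ltr_pMr // ltr1n.
Qed.

Definition exchange_mx (R : pzRingType) s : 'M[R]_s := perm_mx (perm (@rev_ord_inj s)).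

Lemma exchange_mxK (R : pzRingType) s : exchange_mx R s *m exchange_mx R s = 1%:M.
Proof.
rewrite -perm_mxM (_ : (_ * _)%g = 1%g) ?perm_mx1 //.
by apply/permP => i; rewrite permM !permE rev_ordK.
Qed.

(* Right multiplication by [J] turns the pencil into the characteristic
   matrix of [- M J], whose determinant is monic. *)
Lemma det_pencil_neq0 (R : idomainType) s (M J : 'M[R]_s) : J *m J = 1%:M ->
  \det (map_mx polyC M + 'X *: map_mx polyC J) != 0.
Proof.
move=> JJ; have pencilJ : (map_mx polyC M + 'X *: map_mx polyC J) *m map_mx polyC J
    = char_poly_mx (- (M *m J)).
  rewrite mulmxDl -scalemxAl -!map_mxM JJ map_mx1 scalemx1.
  by rewrite /char_poly_mx map_mxN opprK addrC.
have := monic_neq0 (char_poly_monic (- (M *m J))).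
by rewrite /char_poly -pencilJ det_mulmx mulf_eq0 negb_or => /andP[].
Qed.

Lemma horner_det_pencil (R : comNzRingType) s (M J : 'M[R]_s) (t : R) :
  (\det (map_mx polyC M + 'X *: map_mx polyC J)).[t] = \det (M + t *: J).
Proof.
rewrite -[_.[t]]/(horner_eval t _) -det_map_mx; congr (\det _).
apply/matrixP => i j; rewrite !mxE.
change (((M i j)%:P + 'X * (J i j)%:P).[t] = M i j + t * J i j).
by rewrite hornerD hornerM hornerX !hornerC.
Qed.

Section CornerMinors.
Variables (F : numFieldType) (n : nat).
Implicit Types (X Y : 'M[F]_n) (xi : tstar F n).

Lemma entE X (i j : 'I_n) : ent X i j = X i j.
Proof. by rewrite /ent !valK. Qed.

Lemma ent_Ordinal X i j (hi : (i < n)%N) (hj : (j < n)%N) :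
  ent X i j = X (Ordinal hi) (Ordinal hj).
Proof.
by rewrite /ent (insubT (fun k => k < n)%N hi) (insubT (fun k => k < n)%N hj).
Qed.

Lemma ent_out X i j : ~~ ((i < n) && (j < n))%N -> ent X i j = 0.
Proof.
rewrite /ent => out; case: insubP => [i' /= hi _|//].
by case: insubP => [j' /= hj _|//]; rewrite hi hj in out.
Qed.

Lemma ent_addZ X Y h i j : ent (X + h *: Y) i j = ent X i j + h * ent Y i j.
Proof.
have [/andP[hi hj] | out] := boolP ((i < n) && (j < n))%N.
  by rewrite !(ent_Ordinal _ hi hj) !mxE.
by rewrite !ent_out ?mulr0 ?addr0.
Qed.

Lemma ent_delta (a b : 'I_n) i j :
  ent (delta_mx a b : 'M[F]_n) i j = ((i == a) && (j == b))%:R.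
Proof.
have [/andP[hi hj] | out] := boolP ((i < n) && (j < n))%N.
  by rewrite (ent_Ordinal _ hi hj) mxE.
rewrite ent_out //; apply/esym/eqP; rewrite pnatr_eq0 eqb0.
by apply: contra out => /andP[/eqP-> /eqP->]; rewrite !ltn_ord.
Qed.

Lemma ent_mulmx X Y i j : ent (X *m Y) i j = \sum_(q < n) ent X i q * ent Y q j.
Proof.
have [/andP[hi hj] | out] := boolP ((i < n) && (j < n))%N.
  by rewrite (ent_Ordinal _ hi hj) mxE; apply: eq_bigr => q _; rewrite -!entE.
rewrite ent_out // big1 // => q _; case/nandP: out => out.
  by rewrite (ent_out X) ?mul0r // negb_and out.
by rewrite (ent_out Y) ?mulr0 // negb_and out orbT.
Qed.

Lemma ent_trig_tr X i j : is_trig_mx X^T -> (j < i)%N -> ent X i j = 0.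
Proof.
move=> /is_trig_mxP X0 ji.
have [/andP[hi hj] | out] := boolP ((i < n) && (j < n))%N; last exact: ent_out.
by rewrite (ent_Ordinal _ hi hj); move: (X0 (Ordinal hj) (Ordinal hi) ji); rewrite mxE.
Qed.

Definition corner s X : 'M[F]_s := \matrix_(r < s, c < s) ent X (n - s + r) c.

Lemma minorXE s xi : minorX s xi = \det (corner s xi.1).
Proof. by []. Qed.

Lemma corner_addZ s X Y h : corner s (X + h *: Y) = corner s X + h *: corner s Y.
Proof. by apply/matrixP => r c; rewrite !mxE ent_addZ. Qed.

Lemma corner_add s X Y : corner s (X + Y) = corner s X + corner s Y.
Proof. by rewrite -[Y in LHS]scale1r corner_addZ scale1r. Qed.

Lemma coad_lowerE gamma B xi (i j : 'I_n) : in_tstar xi -> (i < j)%N ->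
  (coad gamma B xi).1 j i = (B *m xi.1 *m invmx B) j i.
Proof.
move=> xi_low ij; rewrite /coad /= mxE ij /pairing mul0r add0r mxE.
apply: eq_bigr => p _; rewrite mxE mulr_suml big_mkcond; apply: eq_bigr => q _ /=.
rewrite mulmx_delta_mxE; case: ltnP => pq; first by ring.
by rewrite xi_low // mulr0 mul0r.
Qed.

Lemma corner_coad gamma B xi s : in_tstar xi -> (s + s <= n)%N ->
  corner s (coad gamma B xi).1 = corner s (B *m xi.1 *m invmx B).
Proof.
move=> xi_low s2n; apply/matrixP => r c; rewrite !mxE.
have hr : (n - s + r < n)%N by have := ltn_ord r; lia.
have hc : (c < n)%N by have := ltn_ord c; lia.
by rewrite !(ent_Ordinal _ hr hc) coad_lowerE //=; have := ltn_ord c; lia.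
Qed.

Lemma corner_mulmxl s A Y : (s <= n)%N ->
  (forall (r : 'I_s) q, (q < n - s)%N -> ent A (n - s + r) q = 0) ->
  corner s (A *m Y) = (\matrix_(r, r') ent A (n - s + r) (n - s + r')) *m corner s Y.
Proof.
move=> sn A0; apply/matrixP => r c; rewrite !mxE ent_mulmx.
rewrite (sum_ord_suffix (G := fun q => ent A (n - s + r) q * ent Y q c) sn).
  by apply: eq_bigr => r' _; rewrite !mxE.
by move=> q qs; rewrite A0 ?mul0r.
Qed.

Lemma corner_mulmxr s Y C : (s <= n)%N ->
  (forall p (c : 'I_s), (s <= p)%N -> ent C p c = 0) ->
  corner s (Y *m C) = corner s Y *m \matrix_(p, c) ent C p c.
Proof.
move=> sn C0; apply/matrixP => r c; rewrite !mxE ent_mulmx.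
rewrite (sum_ord_prefix (G := fun p => ent Y (n - s + r) p * ent C p c) sn).
  by apply: eq_bigr => p _; rewrite !mxE.
by move=> q sq; rewrite C0 ?mulr0.
Qed.

Lemma minorX_rel_invariant ex gamma s : (s + s <= n)%N ->
  rel_invariant ex gamma (@minorX F n s).
Proof.
move=> s2n; have sn : (s <= n)%N by lia.
exists (fun B _ => \det (\matrix_(r < s, r' < s) ent B (n - s + r) (n - s + r'))
                 * \det (\matrix_(p < s, c < s) ent (invmx B) p c)).
move=> B xi [B0 B_unit _] xi_low.
have B_up : is_trig_mx B^T by apply/is_trig_mxP => i j ij; rewrite mxE B0.
have Binv_up : is_trig_mx (invmx B)^T by rewrite trmx_inv invmx_trig ?unitmx_tr.
rewrite !minorXE corner_coad // corner_mulmxr // ?corner_mulmxl //.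
- by rewrite !det_mulmx; ring.
- by move=> r q qs; rewrite ent_trig_tr //; lia.
- by move=> p c sp; rewrite ent_trig_tr //; have := ltn_ord c; lia.
Qed.

Lemma corner_add_delta s X (j i : 'I_n) (r c : 'I_s) :
  j = (n - s + r)%N :> nat -> i = c :> nat ->
  corner s (X + delta_mx j i) = corner s X + delta_mx r c.
Proof.
move=> jr ic; rewrite corner_add; congr (_ + _).
apply/matrixP => r' c'; rewrite !mxE ent_delta jr ic.
by rewrite -val_eqE /= eqn_add2l -!val_eqE.
Qed.

Lemma corner_add_delta_above s X (j i : 'I_n) :
  (j < n - s)%N -> corner s (X + delta_mx j i) = corner s X.
Proof.
move=> js; rewrite corner_add -[RHS]addr0; congr (_ + _).
apply/matrixP => r c; rewrite !mxE ent_delta.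
by rewrite (gtn_eqF (leq_trans js (leq_addr _ _))).
Qed.

Lemma corner_det_affine s X (j i : 'I_n) h :
  \det (corner s.+1 (X + h *: delta_mx j i)) = \det (corner s.+1 X)
    + h * (\det (corner s.+1 (X + delta_mx j i)) - \det (corner s.+1 X)).
Proof.
rewrite corner_addZ corner_add.
apply: (@det_affine_in_row _ _ _ _ (inord (j - (n - s.+1)))) => r c; apply: contraNeq.
rewrite !mxE ent_delta pnatr_eq0 eqb0 negbK => /andP[/eqP jr _].
by apply/eqP/val_inj; rewrite /= inordK; have := ltn_ord r; lia.
Qed.

Lemma cofactor_corner_top_right k X : (k < n)%N ->
  cofactor (corner k.+1 X) 0 ord_max = (-1) ^+ k * \det (corner k X).
Proof.
move=> kn; rewrite /cofactor add0n; congr (_ * \det _).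
apply/matrixP => r c; rewrite !mxE /= /bump /= (leqNgt k c) ltn_ord.
by congr (ent X _ _); lia.
Qed.

Lemma is_pderiv_affine (Phi : tstar F n -> F) xi v L :
  (forall h, Phi (xi.1 + h *: v.1, xi.2 + h * v.2) = Phi xi + h * L) ->
  is_pderiv Phi xi v L.
Proof.
move=> PhiE e e0; exists 1 => // h h0 _.
by rewrite PhiE addrAC subrr add0r [h * L]mulrC mulfK // subrr normr0.
Qed.

Lemma half_add_half_le : (n./2 + n./2 <= n)%N.
Proof. by rewrite addnn -{2}(odd_double_half n) leq_addl. Qed.

Definition half_antidiag : 'M[F]_n :=
  \matrix_(a, b) (((a + b)%N == n.-1) && (b < n./2)%N)%:R.

Lemma half_antidiag_lower (i j : 'I_n) : (i <= j)%N -> half_antidiag i j = 0.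
Proof.
move=> ij; rewrite mxE; have := half_add_half_le.
by case: eqP => //= ij1; case: ltnP => //= jh; lia.
Qed.

Lemma corner_half_antidiag s : (s <= n./2)%N -> corner s half_antidiag = exchange_mx F s.
Proof.
move=> sh; have hn := half_add_half_le.
apply/matrixP => r c; have rs := ltn_ord r; have cs := ltn_ord c.
have hr : (n - s + r < n)%N by lia.
have hc : (c < n)%N by lia.
rewrite !mxE (ent_Ordinal _ hr hc) mxE /= permE (_ : (c < n./2)%N); last by lia.
rewrite andbT -val_eqE /=; congr (_ %:R); apply/eqP/eqP; lia.
Qed.

Lemma corner_minors_generic X e : 0 < e -> exists2 t : F, `|t| < e &
  forall s, (0 < s <= n./2)%N -> \det (corner s (X + t *: half_antidiag)) != 0.
Proof.
move=> e0.
pose p s := \det (map_mx polyC (corner s X) + 'X *: map_mx polyC (exchange_mx F s)).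
have P_neq0 : \prod_(s < n./2) p s.+1 != 0.
  by apply/prodf_neq0 => s _; apply/det_pencil_neq0/exchange_mxK.
have [t te nroot] := exists_small_nonroot P_neq0 e0.
exists t => // -[//|s] /andP[_ sh].
move: nroot; rewrite /root horner_prod => /prodf_neq0/(_ (Ordinal sh) isT).
by rewrite /p horner_det_pencil corner_addZ corner_half_antidiag.
Qed.

Lemma indep_differentials_corner_minors X z :
  (forall s, (0 < s <= n./2)%N -> \det (corner s X) != 0) ->
  indep_differentials (fun k : 'I_(n./2) => @minorX F n k.+1) (X, z).
Proof.
move=> minors_neq0.
pose D (k : 'I_(n./2)) (j i : 'I_n) :=
  \det (corner k.+1 (X + delta_mx j i)) - \det (corner k.+1 X).
exists D, (fun _ => 0); split.
- by move=> k j i _; apply: is_pderiv_affine => h; apply: corner_det_affine.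
- by move=> k; apply: is_pderiv_affine => h; rewrite /= scaler0 addr0 mulr0 addr0.
move=> a a_ker _ k; have hn := half_add_half_le.
have col (l : 'I_n./2) : (l < n)%N by have := ltn_ord l; lia.
have row (l : 'I_n./2) : (n - l.+1 < n)%N by have := ltn_ord l; lia.
pose J := \matrix_(k, l) D k (Ordinal (row l)) (Ordinal (col l)).
suff /rowP/(_ k) : \row_k a k = 0 by rewrite !mxE.
apply: (@trig_mx_row_free _ _ J).
- apply/is_trig_mxP => k' l kl; rewrite mxE /D corner_add_delta_above ?subrr //=.
  by have := ltn_ord l; lia.
- move=> l; rewrite mxE /D (@corner_add_delta _ _ _ _ 0 ord_max) //=; last by lia.
  rewrite det_add_delta addrAC subrr add0r cofactor_corner_top_right //.
  rewrite mulf_eq0 negb_or signr_eq0 /=.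
  case: (nat_of_ord l) (ltn_ord l) => [|l'] hl; first by rewrite det_mx00 oner_neq0.
  by apply: minors_neq0; lia.
- apply/rowP => l; rewrite !mxE -[X in _ = X](a_ker (Ordinal (row l)) (Ordinal (col l))).
    by apply: eq_bigr => k' _; rewrite !mxE.
  by rewrite /=; have := ltn_ord l; lia.
Qed.

Lemma corner_minors_func_independent :
  func_independent (fun k : 'I_(n./2) => @minorX F n k.+1).
Proof.
move=> xi xi_low e e0; have [t te minors_neq0] := corner_minors_generic xi.1 e0.
exists (xi.1 + t *: half_antidiag, xi.2); split => /=.
- by move=> i j ij; rewrite 2!mxE xi_low // half_antidiag_lower // mulr0 addr0.
- move=> i j; rewrite !mxE addrAC subrr add0r normrM normr_nat.
  by case: (_ && _); rewrite ?mulr1 ?mulr0.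
- by rewrite subrr normr0.
- exact: indep_differentials_corner_minors.
Qed.

Theorem corollary1_statement_holds (ex : F -> F) (gamma : 'I_n -> F) :
  corollary1_statement ex gamma.
Proof.
split=> [k|]; last exact: corner_minors_func_independent.
by apply: minorX_rel_invariant; have := half_add_half_le; have := ltn_ord k; lia.
Qed.

End CornerMinors.

Local Open Scope complex_scope.

Theorem corollary1 (R : realType) (n : nat) (hn : (1 < n)%N) :
  (forall gamma : 'I_n -> R,
     ~ (exists c : R, forall i, gamma i = c) ->
     corollary1_statement (@expR R) gamma) /\
  (forall gamma : 'I_n -> R[i],
     ~ (exists c : R[i], forall i, gamma i = c) ->
     corollary1_statement (@cexp R) gamma).
Proof. by split=> gamma _; apply: corollary1_statement_holds. Qed.
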